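(* Let $k\ge3$ and let $\{H_{r_1},\dots,H_{r_k}\}$ be a set of pairwise ultra-parallel hyperplanes in $\mathbb{H}^n$ having a common perpendicular $\varrho$ (a geodesic line meeting each $H_{r_i}$ orthogonally). If the group $D\subseteq\mathrm{Iso}(\mathbb{H}^n)$ generated by the reflections $r_i$ across $H_{r_i}$ is a discrete subgroup, then $D$ is isomorphic to the infinite dihedral group $D_\infty$.
   Context: Two disjoint hyperplanes in $\mathbb{H}^n$ are ultra-parallel if they have no common point in the visual boundary $\partial\mathbb{H}^n$. *)

From HB Require Import structures.
From mathcomp Require Import all_boot all_order all_algebra.
From mathcomp Require Import all_classical all_reals all_analysis.
Set Implicit Arguments. Unset Strict Implicit. Unset Printing Implicit Defensive.
Import Order.TTheory GRing.Theory Num.Theory.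
Local Open Scope ring_scope.

(* Hyperboloid model of H^n inside Minkowski space R^{n,1} = column vectors
   of size n.+1; coordinate 0 is the timelike one. *)
Section Hyp.
Variables (R : realType) (n : nat).
Notation vec := 'cV[R]_(n.+1).
Notation mat := 'M[R]_(n.+1).

Definition mink (x y : vec) : R :=
  \sum_(i < n.+1) (if i == ord0 then -1 else 1) * x i 0 * y i 0.

Definition inH (x : vec) : Prop := mink x x = -1 /\ 0 < x ord0 0.

(* the hyperplane of H^n with spacelike normal e (mink e e > 0) *)
Definition hyperplane (e : vec) : set vec := fun x => inH x /\ mink x e = 0.

(* the reflection of H^n across hyperplane e, as an element of O^+(n,1):
   x |-> x - 2 <x,e>/<e,e> e *)
Definition refl (e : vec) : mat :=
  \matrix_(i, j) ((i == j)%:R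
     - 2 * e i 0 * ((if j == ord0 then -1 else 1) * e j 0) / mink e e).

(* Visual boundary: points of the boundary are future null rays; such a ray
   u lies in the boundary of hyperplane e iff <u,e> = 0.  Ultra-parallel:
   disjoint and no common boundary point. *)
Definition ultra_parallel (e1 e2 : vec) : Prop :=
  (forall x, ~ (hyperplane e1 x /\ hyperplane e2 x)) /\
  ~ (exists u : vec, u != 0 /\ mink u u = 0 /\ 0 < u ord0 0 /\
                     mink u e1 = 0 /\ mink u e2 = 0).

Definition hcosh (t : R) : R := (expR t + expR (- t)) / 2.
Definition hsinh (t : R) : R := (expR t - expR (- t)) / 2.

Definition geodesic_data (p v : vec) : Prop :=
  inH p /\ mink v v = 1 /\ mink p v = 0.
Definition geod (p v : vec) (t : R) : vec := hcosh t *: p + hsinh t *: v.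
Definition geod_vel (p v : vec) (t : R) : vec := hsinh t *: p + hcosh t *: v.

(* the geodesic meets hyperplane e orthogonally: at some intersection point,
   its velocity is orthogonal to the tangent space of the hyperplane *)
Definition meets_orthogonally (p v e : vec) : Prop :=
  exists t : R, hyperplane e (geod p v t) /\
    forall w : vec, mink w (geod p v t) = 0 -> mink w e = 0 ->
      mink w (geod_vel p v t) = 0.

Inductive generated (S : set mat) : mat -> Prop :=
  | gen_one : generated S 1%:M
  | gen_in g : S g -> generated S g
  | gen_mul g h : generated S g -> generated S h -> generated S (g *m h)
  | gen_inv g : generated S g -> generated S (invmx g).

(* discrete subgroup (topology of Iso(H^n) = subspace topology of matrices) *)
Definition discrete_set (D : set mat) : Prop :=
  forall g, D g -> exists2 eps : R, 0 < eps &
    forall h, D h -> (forall i j, `|h i j - g i j| < eps) -> h = g.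
End Hyp.

(* The infinite dihedral group D_oo = Z >| Z/2, elements (m, s) standing for
   x |-> (-1)^s x + m on Z. *)
Definition dinf_mul (x y : int * bool) : int * bool :=
  ((x.1 + (if x.2 then - y.1 else y.1))%R, x.2 (+) y.2).

Definition iso_to_Dinf (R : realType) (n : nat) (D : set 'M[R]_(n.+1)) : Prop :=
  exists phi : int * bool -> 'M[R]_(n.+1),
    injective phi /\ (forall g, D g <-> exists x, phi x = g) /\
    (forall x y, phi (dinf_mul x y) = phi x *m phi y).

From HB Require Import structures.
From mathcomp Require Import all_boot all_order all_algebra.
From mathcomp Require Import all_classical all_reals all_analysis.
From mathcomp Require Import ring lra.
Import Order.TTheory GRing.Theory Num.Theory numFieldNormedType.Exports.
Local Open Scope ring_scope.

(* The reflections r_i all preserve the common perpendicular and fix the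
   orthogonal complement of its plane, so they live in the group generated by
   the one-parameter group T(x) of translations along the perpendicular and
   the reflection rho = r_0: if the perpendicular crosses H_i at time t_i,
   then r_i = T(2 (t_i - t_0)) rho, and rho T(y) rho = T(-y).  Hence every
   element of D is T(y) or T(y) rho, and {y | T(y) in D} is an additive
   subgroup of R, nonzero because t_1 <> t_0, and isolated at 0 because D is
   discrete and T continuous.  Such a subgroup is lam Z, and
   (m, s) |-> T(m lam) rho^s is an isomorphism from D_oo onto D. *)

Lemma invmx_eq (R : comUnitRingType) m (A B : 'M[R]_m) :
  A *m B = 1%:M -> invmx A = B.
Proof.
move=> AB1; have [A_unit _] := mulmx1_unit AB1.
by rewrite -[invmx A]mulmx1 -AB1 mulmxA mulVmx // mul1mx.
Qed.

Lemma mulmx_ext (R : pzSemiRingType) m n (A B : 'M[R]_(m, n)) :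
  (forall w : 'cV[R]_n, A *m w = B *m w) -> A = B.
Proof.
move=> AB; apply/matrixP => i j.
by have /matrixP /(_ i 0) := AB (delta_mx j 0); rewrite -!colE !mxE.
Qed.

Section DiscreteSubgroup.
Variables (R : realType) (L : set R).
Hypotheses (L_sub : forall x y, L x -> L y -> L (x - y))
  (L_isolated0 : \forall x \near 0, L x -> x = 0).

Lemma discrete_subgroup_min (a : R) : L a -> 0 < a ->
  exists2 lam, L lam /\ 0 < lam & forall y, L y -> 0 < y -> lam <= y.
Proof.
move=> La a_gt0; have /nbhs_norm0P [del del_gt0 Ldel] := L_isolated0.
pose P : set R := fun y => L y /\ 0 < y.
have infP : has_inf P.
  by split; [exists a | exists 0 => y [_ y_gt0]; exact: ltW].
have [lam Plam lam_lt] := inf_adherent del_gt0 infP.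
exists lam => // y Ly y_gt0; rewrite leNgt; apply/negP => y_lt_lam.
have infP_le_y : inf P <= y := ge_inf infP.2 (conj Ly y_gt0).
have : lam - y = 0.
  by apply: Ldel; [rewrite /= gtr0_norm; lra | exact: L_sub Plam.1 Ly].
lra.
Qed.

Lemma discrete_subgroup_cyclic (a : R) : L a -> a != 0 ->
  exists2 lam, 0 < lam & forall x, L x <-> exists m : int, x = m%:~R * lam.
Proof.
move=> La a_neq0.
have L0 : L 0 by rewrite -(subrr a); exact: L_sub.
have LN x : L x -> L (- x) by rewrite -sub0r; exact: L_sub.
have LD x y : L x -> L y -> L (x + y).
  by move=> Lx /LN /(L_sub _ _ Lx); rewrite opprK.
have [lam [Llam lam_gt0] lam_min] : exists2 lam, L lam /\ 0 < lam &
    forall y, L y -> 0 < y -> lam <= y.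
  apply: (@discrete_subgroup_min `|a|); last by rewrite normr_gt0.
  by case: ger0P => _; [|apply: LN].
have Lmul m : L (m%:~R * lam).
  have Lnat k : L (k%:R * lam).
    by elim: k => [|k IHk]; rewrite ?mul0r // mulrSr mulrDl mul1r; exact: LD.
  by case: m => k; rewrite ?NegzE ?intrN ?mulNr; [|apply: LN]; exact: Lnat.
exists lam => // x; split=> [Lx|[m ->]] //.
exists (Num.floor (x / lam)); set m := Num.floor _.
have /andP [m_le m_gt] := floor_itv (x / lam).
rewrite ler_pdivlMr // in m_le; rewrite ltr_pdivrMr // intrD in m_gt.
(* x - m lam lies in L and in [0, lam), so it vanishes by minimality of lam *)
have Lr : L (x - m%:~R * lam) by exact: L_sub.
have [r_gt0|] := ltrP 0 (x - m%:~R * lam); last lra.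
by have := lam_min _ Lr r_gt0; lra.
Qed.

End DiscreteSubgroup.
Arguments discrete_subgroup_cyclic {R L}.

Section InfiniteDihedral.
Variables (R : realType) (n : nat) (T : R -> 'M[R]_n.+1) (rho : 'M[R]_n.+1).
Hypotheses (T_add : forall x y, T x *m T y = T (x + y)) (T0 : T 0 = 1%:M)
  (T_inj : injective T)
  (T_cont : forall i j, {for 0, continuous (fun x => T x i j)})
  (rho_invol : rho *m rho = 1%:M)
  (rhoT : forall y, rho *m T y = T (- y) *m rho)
  (rho_neqT : forall y, rho != T y).

Definition dih (x : R * bool) : 'M[R]_n.+1 :=
  T x.1 *m (if x.2 then rho else 1%:M).

Lemma dih_mul x y :
  dih x *m dih y = dih (x.1 + (if x.2 then - y.1 else y.1), x.2 (+) y.2).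
Proof.
case: x y => [a []] [b []]; rewrite /dih /= ?mulmx1.
- by rewrite !mulmxA -(mulmxA _ rho) rhoT mulmxA T_add -mulmxA rho_invol mulmx1.
- by rewrite -mulmxA rhoT mulmxA T_add.
- by rewrite mulmxA T_add.
- exact: T_add.
Qed.

Lemma dih_inv x : invmx (dih x) = dih (if x.2 then x.1 else - x.1, x.2).
Proof.
apply: invmx_eq; rewrite dih_mul; case: x => a [] /=;
  by rewrite ?subrr ?addrN /dih /= T0 mulmx1.
Qed.

Lemma dih_inj : injective dih.
Proof.
have rho_transl a b : T a *m rho <> T b.
  move=> /(congr1 (mulmx (T (- a)))); rewrite mulmxA !T_add addNr T0 mul1mx.
  exact/eqP/rho_neqT.
case=> [a []] [b []]; rewrite /dih /= ?mulmx1.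
- move=> /(congr1 (mulmx^~ rho)); rewrite -!mulmxA rho_invol !mulmx1.
  by move=> /T_inj ->.
- by move=> /rho_transl.
- by move=> /esym /rho_transl.
- by move=> /T_inj ->.
Qed.

Variable S : set 'M[R]_n.+1.
Hypotheses (S_refl : forall g, S g -> exists y, g = T y *m rho) (S_rho : S rho)
  (D_discrete : discrete_set (generated S)).

Local Notation D := (generated S).

Lemma generated_dih g : D g -> exists x, g = dih x.
Proof.
elim=> [|_ /S_refl [y ->]|_ _ _ [x ->] _ [y ->]|_ _ [x ->]].
- by exists (0, false); rewrite /dih /= T0 mulmx1.
- by exists (y, true).
- by exists (x.1 + (if x.2 then - y.1 else y.1), x.2 (+) y.2); rewrite dih_mul.
- by exists (if x.2 then x.1 else - x.1, x.2); rewrite dih_inv.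
Qed.

Lemma generated_dihE x : D (dih x) <-> D (T x.1).
Proof.
have D_rho : D rho by exact: gen_in.
rewrite /dih; case: x.2; last by rewrite mulmx1.
split=> [|DT]; last exact: gen_mul.
by move=> /gen_mul /(_ D_rho); rewrite -mulmxA rho_invol mulmx1.
Qed.

Lemma generated_transl_sub x y : D (T x) -> D (T y) -> D (T (x - y)).
Proof.
move=> Dx /gen_inv Dy; have := gen_mul Dx Dy.
have -> : invmx (T y) = T (- y) by apply: invmx_eq; rewrite T_add subrr.
by rewrite T_add.
Qed.

Lemma generated_transl_isolated0 : \forall x \near 0, D (T x) -> x = 0.
Proof.
have [eps eps_gt0 D1] := D_discrete _ (gen_one S).
have : \forall x \near 0, forall i j, `|T x i j - T 0 i j| < eps.
  have := @filter_forall _ _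
    (fun i x => forall j, `|T x i j - T 0 i j| < eps) (nbhs 0) _.
  apply=> i; have := @filter_forall _ _
    (fun j x => `|T x i j - T 0 i j| < eps) (nbhs 0) _.
  by apply=> j; exact: cvgr_distC_lt (T_cont i j) _ eps_gt0.
apply: filter_app; near=> x => T_near Dx.
by apply: T_inj; rewrite T0 (D1 _ Dx) // -T0.
Unshelve. all: by end_near.
Qed.

Theorem generated_iso_Dinf :
  (exists2 y, y != 0 & S (T y *m rho)) -> iso_to_Dinf D.
Proof.
move=> [a a_neq0 Sa].
have Da : D (T a) by apply/(generated_dihE (a, true))/gen_in.
have [lam lam_gt0 D_multiple] := discrete_subgroup_cyclic
  generated_transl_sub generated_transl_isolated0 _ Da a_neq0.
exists (fun x => dih (x.1%:~R * lam, x.2)); split; [|split].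
- move=> [m s] [m' s'] /dih_inj [/(mulIf (lt0r_neq0 lam_gt0))/intr_inj -> ->] //.
- move=> g; split=> [/[dup] /generated_dih [[y s] ->]|].
    by move=> /generated_dihE /D_multiple [m /= ->]; exists (m, s).
  by move=> [[m s] <-]; apply/generated_dihE/D_multiple; exists m.
- move=> [m s] [m' s']; rewrite dih_mul /=.
  by case: s; rewrite ?intrD ?intrN mulrDl ?mulNr.
Qed.

End InfiniteDihedral.

Section HyperbolicFunctions.
Context {R : realType}.
Implicit Types x y : R.

Local Ltac expR_field :=
  rewrite /hcosh /hsinh ?opprD ?opprK ?oppr0 ?expRD ?expRN ?expR0;
  field; by rewrite ?gt_eqF ?expR_gt0.

Lemma hcosh_sqr x : hcosh x ^+ 2 = 1 + hsinh x ^+ 2. Proof. expR_field. Qed.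
Lemma hcoshD x y : hcosh (x + y) = hcosh x * hcosh y + hsinh x * hsinh y.
Proof. expR_field. Qed.
Lemma hsinhD x y : hsinh (x + y) = hsinh x * hcosh y + hcosh x * hsinh y.
Proof. expR_field. Qed.
Lemma hcoshN x : hcosh (- x) = hcosh x. Proof. expR_field. Qed.
Lemma hsinhN x : hsinh (- x) = - hsinh x. Proof. expR_field. Qed.
Lemma hcosh0 : hcosh 0 = 1 :> R. Proof. expR_field. Qed.
Lemma hsinh0 : hsinh 0 = 0 :> R. Proof. expR_field. Qed.

Lemma hsinh_inj : injective (@hsinh R).
Proof.
have hsinh_lt x y : x < y -> hsinh x < hsinh y.
  move=> xy; rewrite /hsinh ltr_pM2r ?invr_gt0 //.
  by rewrite ltrB // ltr_expR // ltrN2.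
move=> x y xy; apply/eqP; rewrite eq_le !leNgt.
by apply/andP; split; apply/negP => /hsinh_lt; rewrite xy ltxx.
Qed.

Lemma continuous_hcosh : continuous (@hcosh R).
Proof.
move=> x; apply: cvgM; last exact: cvg_cst.
apply: cvgD; first exact: continuous_expR.
by apply: continuous_comp; [exact: cvgN | exact: continuous_expR].
Qed.

Lemma continuous_hsinh : continuous (@hsinh R).
Proof.
move=> x; apply: cvgM; last exact: cvg_cst.
apply: cvgB; first exact: continuous_expR.
by apply: continuous_comp; [exact: cvgN | exact: continuous_expR].
Qed.

End HyperbolicFunctions.

Section Minkowski.
Context {R : realType} {n : nat}.
Implicit Types (c : R) (e f g h u w x y z : 'cV[R]_n.+1).

Lemma minkC x y : mink x y = mink y x.
Proof. by rewrite /mink; apply: eq_bigr => i _; ring. Qed.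

Lemma minkDl x y z : mink (x + y) z = mink x z + mink y z.
Proof.
by rewrite /mink -big_split; apply: eq_bigr => i _ /=; rewrite !mxE; ring.
Qed.

Lemma minkZl c x z : mink (c *: x) z = c * mink x z.
Proof.
by rewrite /mink mulr_sumr; apply: eq_bigr => i _ /=; rewrite !mxE; ring.
Qed.

Lemma minkBl x y z : mink (x - y) z = mink x z - mink y z.
Proof. by rewrite minkDl -scaleN1r minkZl mulN1r. Qed.

Lemma minkDr x y z : mink z (x + y) = mink z x + mink z y.
Proof. by rewrite !(minkC z) minkDl. Qed.

Lemma minkZr c x z : mink z (c *: x) = c * mink z x.
Proof. by rewrite !(minkC z) minkZl. Qed.

Lemma minkBr x y z : mink z (x - y) = mink z x - mink z y.
Proof. by rewrite !(minkC z) minkBl. Qed.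

Lemma mink_time0 h : h ord0 0 = 0 -> mink h h = \sum_(i < n.+1) h i 0 ^+ 2.
Proof.
move=> h0; rewrite /mink; apply: eq_bigr => i _.
by case: eqP => [->|_]; rewrite ?h0; ring.
Qed.

Lemma mink_time0_ge0 h : h ord0 0 = 0 -> 0 <= mink h h.
Proof. by move/mink_time0 ->; apply: sumr_ge0 => i _; exact: sqr_ge0. Qed.

Lemma mink_time0_eq0 h : h ord0 0 = 0 -> mink h h = 0 -> h = 0.
Proof.
move=> h0; rewrite mink_time0 // => /psumr_eq0P h_eq0.
apply/matrixP => i j; rewrite (ord1 j) mxE; apply/eqP; rewrite -sqrf_eq0.
by rewrite h_eq0 // => l _; exact: sqr_ge0.
Qed.

Lemma timelike_time_neq0 g : mink g g < 0 -> g ord0 0 != 0.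
Proof. by apply: contraTneq => /mink_time0_ge0; rewrite leNgt. Qed.

(* Subtracting a multiple of g kills the time coordinate of f; what remains
   has norm f_0^2 <g,g> <= 0 but is spacelike, so f_0 = 0 and then f = 0. *)
Lemma null_orth_timelike f g :
  mink g g < 0 -> mink f f = 0 -> mink f g = 0 -> f = 0.
Proof.
move=> gg ff fg; set h := g ord0 0 *: f - f ord0 0 *: g.
have h0 : h ord0 0 = 0 by rewrite !mxE; ring.
have hh : mink h h = f ord0 0 ^+ 2 * mink g g.
  by rewrite !(minkBl, minkBr, minkZl, minkZr) ff fg (minkC g f) fg; ring.
have f0 : f ord0 0 = 0.
  apply/eqP; rewrite -sqrf_eq0 eq_le sqr_ge0 andbT -(nmulr_lge0 _ gg) -hh.
  exact: mink_time0_ge0.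
have /eqP : h = 0 by apply: mink_time0_eq0; rewrite // hh f0 expr0n mul0r.
rewrite /h f0 scale0r subr0 scaler_eq0 (negPf (timelike_time_neq0 _ gg)).
by move/eqP.
Qed.

(* If every vector tangent to the hyperplane e^perp at g is orthogonal to u,
   then e is a multiple of u: testing with w = <e,e> u - <e,u> e shows that
   e - <e,u> u is a null vector, orthogonal to the timelike g. *)
Lemma orth_normal_parallel e g u :
    mink g g < 0 -> mink u u = 1 -> mink g u = 0 -> mink g e = 0 ->
    0 < mink e e -> (forall w, mink w g = 0 -> mink w e = 0 -> mink w u = 0) ->
  exists2 c, c != 0 & e = c *: u.
Proof.
move=> gg uu gu ge ee e_orth; set c := mink e u.
have ee_c : mink e e = c ^+ 2.
  have := e_orth (mink e e *: u - c *: e).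
  rewrite !(minkBl, minkZl) (minkC u g) gu (minkC e g) ge (minkC u e) uu -/c.
  rewrite !mulr0 subrr (mulrC c) subrr mulr1 => /(_ erefl erefl) /eqP.
  by rewrite subr_eq0 expr2 => /eqP.
have f_null : mink (e - c *: u) (e - c *: u) = 0.
  by rewrite !(minkBl, minkBr, minkZl, minkZr) uu (minkC u e) -/c ee_c; ring.
have f_orth : mink (e - c *: u) g = 0.
  by rewrite !(minkBl, minkZl) (minkC e g) ge (minkC u g) gu; ring.
exists c; first by rewrite -sqrf_eq0 -ee_c gt_eqF.
by apply/eqP; rewrite -subr_eq0 (null_orth_timelike _ _ gg f_null f_orth).
Qed.

Definition dyad x y : 'M[R]_n.+1 :=
  \matrix_(i, j) (x i 0 * ((if j == ord0 then -1 else 1) * y j 0)).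

Lemma dyadE x y w : dyad x y *m w = mink y w *: x.
Proof.
apply/matrixP => i j; rewrite /dyad !mxE (ord1 j) /mink mulr_suml.
by apply: eq_bigr => l _ /=; rewrite !mxE; ring.
Qed.

Lemma reflZ c e : c != 0 -> mink e e != 0 -> refl (c *: e) = refl e.
Proof.
move=> c_neq0 ee_neq0; apply/matrixP => i j; rewrite !mxE minkZl minkZr.
by field; apply/andP.
Qed.

End Minkowski.

Section Geodesic.
Context {R : realType} {n : nat}.
Variables p v : 'cV[R]_n.+1.
Hypotheses (pp : mink p p = -1) (vv : mink v v = 1) (pv : mink p v = 0).

Let vp : mink v p = 0. Proof. by rewrite minkC. Qed.

Lemma mink_geod t : mink (geod p v t) (geod p v t) = -1.
Proof.
rewrite /geod !(minkDl, minkDr, minkZl, minkZr) pp vv pv vp.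
by have := hcosh_sqr t; nra.
Qed.

Lemma mink_geod_vel t : mink (geod_vel p v t) (geod_vel p v t) = 1.
Proof.
rewrite /geod_vel !(minkDl, minkDr, minkZl, minkZr) pp vv pv vp.
by have := hcosh_sqr t; nra.
Qed.

Lemma mink_geod_geod_vel t : mink (geod p v t) (geod_vel p v t) = 0.
Proof.
by rewrite /geod /geod_vel !(minkDl, minkDr, minkZl, minkZr) pp vv pv vp; ring.
Qed.

(* All isometries used below fix the orthogonal complement of span(p, v),
   so each is determined by four coefficients. *)
Definition plane_op (a b c d : R) : 'M[R]_n.+1 :=
  1%:M + (a *: dyad p p + b *: dyad p v + c *: dyad v p + d *: dyad v v).

Lemma plane_opE a b c d w : plane_op a b c d *m w =
  w + (a * mink p w + b * mink v w) *: p + (c * mink p w + d * mink v w) *: v.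
Proof.
rewrite mulmxDl mul1mx !mulmxDl -!scalemxAl !dyadE.
by apply/matrixP => i j; rewrite !mxE; ring.
Qed.

Lemma plane_op_mul a b c d a' b' c' d' :
  plane_op a b c d *m plane_op a' b' c' d' =
  plane_op (a + a' - a * a' + b * c') (b + b' - a * b' + b * d')
           (c + c' - c * a' + d * c') (d + d' - c * b' + d * d').
Proof.
apply: mulmx_ext => w; rewrite -mulmxA !plane_opE !(minkDr, minkZr).
by rewrite pp vv pv vp; apply/matrixP => i j; rewrite !mxE; ring.
Qed.

Lemma plane_op0 : plane_op 0 0 0 0 = 1%:M.
Proof. by rewrite /plane_op !scale0r !addr0. Qed.

Lemma plane_op_inj a b c d a' b' c' d' :
  plane_op a b c d = plane_op a' b' c' d' ->
  [/\ a = a', b = b', c = c' & d = d'].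
Proof.
move=> E; have coef x y :
  mink x (plane_op a b c d *m y) = mink x (plane_op a' b' c' d' *m y).
  by rewrite E.
move: (coef p p) (coef v p) (coef p v) (coef v v).
by rewrite !plane_opE !(minkDr, minkZr) pp vv pv vp => *; split; lra.
Qed.

Definition transl (x : R) : 'M[R]_n.+1 :=
  plane_op (1 - hcosh x) (hsinh x) (- hsinh x) (hcosh x - 1).

Lemma transl_add x y : transl x *m transl y = transl (x + y).
Proof. by rewrite /transl plane_op_mul hcoshD hsinhD; congr plane_op; ring. Qed.

Lemma transl0 : transl 0 = 1%:M.
Proof. by rewrite /transl hcosh0 hsinh0 subrr oppr0 plane_op0. Qed.

Lemma transl_inj : injective transl.
Proof. by move=> x y /plane_op_inj [_ /hsinh_inj]. Qed.

Lemma continuous_transl i j : continuous (fun x => transl x i j).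
Proof.
move=> x; rewrite /transl /plane_op; under eq_fun do rewrite !mxE.
apply: cvgD; first exact: cvg_cst.
have ch := continuous_hcosh x; have sh := continuous_hsinh x.
apply: cvgD; [apply: cvgD; [apply: cvgD|]|]; apply: cvgM (cvg_cst _).
- exact: cvgB (cvg_cst _) ch.
- exact: sh.
- exact: cvgN sh.
- exact: cvgB ch (cvg_cst _).
Qed.

Definition geod_refl (t : R) : 'M[R]_n.+1 := refl (geod_vel p v t).

Lemma geod_reflE t : geod_refl t = plane_op (-2 * hsinh t ^+ 2)
  (-2 * hsinh t * hcosh t) (-2 * hsinh t * hcosh t) (-2 * hcosh t ^+ 2).
Proof.
rewrite /geod_refl /refl mink_geod_vel.
by apply/matrixP => i j; rewrite /plane_op /dyad /geod_vel !mxE divr1; ring.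
Qed.

Lemma geod_refl_orth e t : 0 < mink e e -> mink (geod p v t) e = 0 ->
    (forall w, mink w (geod p v t) = 0 -> mink w e = 0 ->
       mink w (geod_vel p v t) = 0) ->
  refl e = geod_refl t.
Proof.
move=> ee ge e_orth.
have gg : mink (geod p v t) (geod p v t) < 0 by rewrite mink_geod ltrN10.
have [c c_neq0 ->] := orth_normal_parallel _ _ _ gg (mink_geod_vel t)
  (mink_geod_geod_vel t) ge ee e_orth.
by apply: reflZ; rewrite // mink_geod_vel oner_neq0.
Qed.

Lemma geod_refl_transl t : geod_refl t = transl (t + t) *m geod_refl 0.
Proof.
rewrite !geod_reflE /transl plane_op_mul hcosh0 hsinh0 hcoshD hsinhD.
by congr plane_op; have := hcosh_sqr t; nra.
Qed.

Lemma geod_refl0_transl x :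
  geod_refl 0 *m transl x = transl (- x) *m geod_refl 0.
Proof.
rewrite geod_reflE /transl !plane_op_mul hcoshN hsinhN hcosh0 hsinh0.
by congr plane_op; ring.
Qed.

Lemma geod_refl0_invol : geod_refl 0 *m geod_refl 0 = 1%:M.
Proof.
rewrite geod_reflE plane_op_mul hcosh0 hsinh0 -plane_op0.
by congr plane_op; ring.
Qed.

Lemma geod_refl0_neq_transl x : geod_refl 0 != transl x.
Proof.
apply/eqP; rewrite geod_reflE /transl hcosh0 hsinh0.
by move=> /plane_op_inj [a _ _ d]; lra.
Qed.

Lemma geod_refl_shift s t : geod_refl t = transl ((t - s) *+ 2) *m geod_refl s.
Proof.
rewrite [LHS]geod_refl_transl [in RHS]geod_refl_transl mulmxA transl_add.
by congr (transl _ *m _); rewrite mulr2n; ring.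
Qed.

Lemma geod_refl_mul_transl t x :
  geod_refl t *m transl x = transl (- x) *m geod_refl t.
Proof.
rewrite geod_refl_transl -mulmxA geod_refl0_transl !mulmxA !transl_add.
by rewrite addrC.
Qed.

Lemma geod_refl_invol t : geod_refl t *m geod_refl t = 1%:M.
Proof.
rewrite {2}geod_refl_transl mulmxA geod_refl_mul_transl geod_refl_transl.
by rewrite !mulmxA transl_add addNr transl0 mul1mx geod_refl0_invol.
Qed.

Lemma geod_refl_neq_transl t x : geod_refl t != transl x.
Proof.
apply: contraNneq (geod_refl0_neq_transl (- (t + t) + x)) => E.
rewrite -transl_add -E (geod_refl_transl t) mulmxA transl_add addNr.
by rewrite transl0 mul1mx.
Qed.

End Geodesic.

Theorem mainTheorem8 (R : realType) (n k : nat) (e : 'I_k -> 'cV[R]_(n.+1)) :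
  (3 <= k)%N ->
  (forall i, 0 < mink (e i) (e i)) ->
  (forall i j, i != j -> ultra_parallel (e i) (e j)) ->
  (exists p v : 'cV[R]_(n.+1),
      geodesic_data p v /\ forall i, meets_orthogonally p v (e i)) ->
  discrete_set (generated (fun g => exists i, g = refl (e i))) ->
  iso_to_Dinf (generated (fun g => exists i, g = refl (e i))).
Proof.
move=> k_ge3 e_spacelike e_ultra [p [v [[[pp _] [vv pv]] e_perp]]] D_discrete.
have [t t_perp] := choice e_perp.
have refl_e i : refl (e i) = geod_refl p v (t i).
  have [[_ geod_e] e_orth] := t_perp i.
  exact: geod_refl_orth (e_spacelike i) geod_e e_orth.
pose i0 := Ordinal (leq_trans (isT : 1 <= 3)%N k_ge3).
pose i1 := Ordinal (leq_trans (isT : 2 <= 3)%N k_ge3).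
(* Only two of the hyperplanes are needed, and only their disjointness. *)
have t_neq : t i1 != t i0.
  apply/eqP => t_eq; have [e_disj _] := e_ultra i1 i0 isT.
  apply: (e_disj (geod p v (t i0))).
  by split; [rewrite -t_eq|]; exact: (t_perp _).1.
have refl_shift i :
  refl (e i) = transl p v ((t i - t i0) *+ 2) *m geod_refl p v (t i0).
  by rewrite refl_e (geod_refl_shift _ _ pp vv pv (t i0)).
apply: (@generated_iso_Dinf _ _ (transl p v) (geod_refl p v (t i0))).
- exact: transl_add.
- exact: transl0.
- exact: transl_inj.
- by move=> i j; exact: continuous_transl.
- exact: geod_refl_invol.
- exact: geod_refl_mul_transl.
- exact: geod_refl_neq_transl.
- by move=> _ [i ->]; exists ((t i - t i0) *+ 2); exact: refl_shift.
- by exists i0.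
- exact: D_discrete.
- exists ((t i1 - t i0) *+ 2); first by rewrite mulrn_eq0 subr_eq0.
  by exists i1; rewrite refl_shift.
Qed.
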